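(* A finite simple graph $G$ is a circular-arc graph if and only if $V(G)$ admits a linear ordering $\le$ with no four distinct vertices $w_1<w_2<w_3<w_4$ satisfying either ($w_1w_3\in E(G)$, $w_1w_2\notin E(G)$ and $w_3w_4\notin E(G)$) or ($w_2w_4\in E(G)$, $w_2w_3\notin E(G)$ and $w_1w_4\notin E(G)$).
   Context: A circular-arc graph is the intersection graph of a finite family of arcs of a circle. (In the paper this forbidden family is denoted $L(CA)$: the linearly ordered graphs on four vertices whose circular closure is represented by the circular pattern with circularly consecutive vertices $v_1,v_2,v_3,v_4$, required edge $v_2v_4$ and required non-edges $v_1v_4$, $v_2v_3$.) *)

From Stdlib Require Import Reals ZArith.
From mathcomp Require Import all_boot.

Set Implicit Arguments.
Unset Strict Implicit.
Unset Printing Implicit Defensive.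

Definition simple_graph (T : finType) (e : rel T) : Prop :=
  symmetric e /\ irreflexive e.

(* The circle is R/Z.  A point of the circle is represented by any real lift.
   The closed arc starting at s (counterclockwise) with length l >= 0 is the set
   of points x of the circle such that some lift x + k (k integer) lies in [s, s+l]
   (l >= 1 gives the whole circle). *)
Definition on_arc (s l x : R) : Prop :=
  exists k : Z, Rle s (Rplus x (IZR k)) /\ Rle (Rplus x (IZR k)) (Rplus s l).

Definition arcs_intersect (s1 l1 s2 l2 : R) : Prop :=
  exists x : R, on_arc s1 l1 x /\ on_arc s2 l2 x.

Definition circular_arc_graph (T : finType) (e : rel T) : Prop :=
  exists (s l : T -> R),
    (forall v, Rle R0 (l v)) /\
    (forall u v, u <> v -> (e u v <-> arcs_intersect (s u) (l u) (s v) (l v))).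

Definition strict_linear_order (T : finType) (lt : T -> T -> Prop) : Prop :=
  (forall x, ~ lt x x) /\
  (forall x y z, lt x y -> lt y z -> lt x z) /\
  (forall x y, x <> y -> lt x y \/ lt y x).

Definition forbidden_pattern (T : finType) (e : rel T) (w1 w2 w3 w4 : T) : Prop :=
  (e w1 w3 /\ ~~ e w1 w2 /\ ~~ e w3 w4) \/
  (e w2 w4 /\ ~~ e w2 w3 /\ ~~ e w1 w4).

(** Given arcs, normalise their starting points into [0, 1) and order the
    vertices by starting point.  In either forbidden pattern, the two
    non-edges say that the arcs of w1 and w3 (resp. of w2 and w4) stop before
    the next starting point in circular order, which keeps these two arcs
    disjoint, contradicting the required edge.

    Conversely, number the vertices 0, ..., N-1 along the ordering, put the
    vertex of rank i at the point i/N of the circle and let its arc run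
    clockwise exactly as far as the following vertices are all its neighbours.
    Arcs then only meet along edges; the forbidden patterns are exactly what
    forces every edge ij, i before j, to be covered either by the arc of i
    running forward to j or by the arc of j running forward around the circle
    to i. *)

From Stdlib Require Import Reals ZArith.
From mathcomp Require Import all_boot.
From Stdlib Require Import Lra Lia ClassicalEpsilon.
From mathcomp Require Import zify.
Delimit Scope R_scope with Re.

Set Implicit Arguments.
Unset Strict Implicit.
Unset Printing Implicit Defensive.

Lemma arcs_intersect_iff (s1 l1 s2 l2 : R) : (0 <= l1)%Re -> (0 <= l2)%Re ->
  arcs_intersect s1 l1 s2 l2 <-> on_arc s1 l1 s2 \/ on_arc s2 l2 s1.
Proof.
move=> l1_ge0 l2_ge0; split.
- move=> [x [[k1 [H1 H2]] [k2 [H3 H4]]]].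
  case: (Rle_or_lt s1 (s2 + IZR (k1 - k2))) => H.
  + left; exists (k1 - k2)%Z; rewrite minus_IZR in H; rewrite minus_IZR; lra.
  + right; exists (k2 - k1)%Z; rewrite minus_IZR in H; rewrite minus_IZR; lra.
- case=> h; [exists s2 | exists s1]; split => //; exists 0%Z; lra.
Qed.

Lemma on_arc_shift (k : Z) (s l x : R) : on_arc (IZR k + s) l x <-> on_arc s l x.
Proof.
split=> -[j hj].
- exists (j - k)%Z; rewrite minus_IZR; lra.
- exists (j + k)%Z; rewrite plus_IZR; lra.
Qed.

Lemma arcs_intersect_frac_part (s1 l1 s2 l2 : R) :
  arcs_intersect s1 l1 s2 l2 <->
  arcs_intersect (frac_part s1) l1 (frac_part s2) l2.
Proof.
rewrite {1}(Rplus_Int_part_frac_part s1) {1}(Rplus_Int_part_frac_part s2).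
by split=> -[x [h1 h2]]; exists x; move: h1 h2; rewrite !on_arc_shift.
Qed.

Lemma circular_arc_graph_unit_starts (T : finType) (e : rel T) :
  circular_arc_graph e ->
  exists s l : T -> R, (forall v, 0 <= l v)%Re /\ (forall v, 0 <= s v < 1)%Re /\
    (forall u v, u <> v -> (e u v <-> arcs_intersect (s u) (l u) (s v) (l v))).
Proof.
move=> [s [l [l_ge0 He]]].
exists (fun v => frac_part (s v)), l; split; [|split] => //.
- by move=> v; have := base_fp (s v); lra.
- by move=> u v nuv; rewrite He // arcs_intersect_frac_part.
Qed.

Lemma not_on_arc_lt (k : Z) (s l x : R) :
  (s <= x + IZR k)%Re -> ~ on_arc s l x -> (s + l < x + IZR k)%Re.
Proof. by move=> h nh; apply: Rnot_le_lt => h'; apply: nh; exists k. Qed.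

Lemma arcs_disjoint_of_gaps (a b c d la lc : R) :
  (0 <= la)%Re -> (0 <= lc)%Re -> (a <= b <= c)%Re -> (d <= a + 1)%Re ->
  (a + la < b)%Re -> (c + lc < d)%Re -> ~ arcs_intersect a la c lc.
Proof.
move=> la_ge0 lc_ge0 abc da gap_ab gap_cd.
rewrite arcs_intersect_iff //; case=> -[k [h1 h2]].
- have /lt_IZR k_lt0 : (IZR k < 0)%Re by lra.
  have : (IZR k <= -1)%Re by apply: (IZR_le k (-1)); lia.
  lra.
- have /lt_IZR k_lt1 : (IZR k < 1)%Re by lra.
  have : (IZR k <= 0)%Re by apply: (IZR_le k 0); lia.
  lra.
Qed.

Definition lex_lt (T : finType) (f : T -> R) (u v : T) : Prop :=
  (f u < f v)%Re \/ (f u = f v /\ enum_rank u < enum_rank v).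

Lemma lex_lt_strict_linear_order (T : finType) (f : T -> R) :
  strict_linear_order (lex_lt f).
Proof.
split; [|split].
- by move=> x [h|[_ h]]; [lra | rewrite ltnn in h].
- move=> x y z [h1|[h1 h1']] [h2|[h2 h2']]; try by left; lra.
  by right; split; [congruence | exact: ltn_trans h1' h2'].
- move=> x y nxy; case: (Rtotal_order (f x) (f y)) => [h|[h|h]].
  + by left; left.
  + case: (ltngtP (enum_rank x) (enum_rank y)) => h'.
    * by left; right.
    * by right; right.
    * by case: nxy; apply/enum_rank_inj/val_inj.
  + by right; left.
Qed.

Lemma lex_lt_le (T : finType) (f : T -> R) (u v : T) :
  lex_lt f u v -> (f u <= f v)%Re.
Proof. by case=> [h|[h _]]; lra. Qed.

Lemma circular_arc_graph_ordering (T : finType) (e : rel T) :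
  circular_arc_graph e ->
  exists lt : T -> T -> Prop,
    strict_linear_order lt /\
    ~ (exists w1 w2 w3 w4 : T,
         lt w1 w2 /\ lt w2 w3 /\ lt w3 w4 /\ forbidden_pattern e w1 w2 w3 w4).
Proof.
move=> /circular_arc_graph_unit_starts [s [l [l_ge0 [s_unit He]]]].
have lex_order := lex_lt_strict_linear_order s.
exists (lex_lt s); split => //.
have [irr [trans _]] := lex_order.
have neq u v : lex_lt s u v -> u <> v by move=> h euv; subst; exact: irr h.
have apart u v : lex_lt s u v -> ~~ e u v -> ~ arcs_intersect (s u) (l u) (s v) (l v).
  by move=> /neq nuv /negP ne /(He _ _ nuv).
have gap u v : lex_lt s u v -> ~~ e u v -> (s u + l u < s v)%Re.
  move=> huv ne; suff : (s u + l u < s v + IZR 0)%Re by lra.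
  apply: not_on_arc_lt; first by have := lex_lt_le huv; lra.
  by move=> h; apply: (apart _ _ huv ne); apply/arcs_intersect_iff => //; left.
have wrap_gap u v : lex_lt s u v -> ~~ e u v -> (s v + l v < s u + 1)%Re.
  move=> huv ne; suff : (s v + l v < s u + IZR 1)%Re by lra.
  apply: not_on_arc_lt; first by have := s_unit u; have := s_unit v; lra.
  by move=> h; apply: (apart _ _ huv ne); apply/arcs_intersect_iff => //; right.
move=> [w1 [w2 [w3 [w4 [h12 [h23 [h34 pattern]]]]]]].
have h13 := trans _ _ _ h12 h23; have h24 := trans _ _ _ h23 h34.
have h14 := trans _ _ _ h13 h34.
move: (lex_lt_le h12) (lex_lt_le h23) (lex_lt_le h34) (s_unit w1) (s_unit w4).
case: pattern => [[e13 [n12 n34]]|[e24 [n23 n14]]] le12 le23 le34 s1 s4.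
- have gap12 := gap _ _ h12 n12; have gap34 := gap _ _ h34 n34.
  apply: (arcs_disjoint_of_gaps (b := s w2) (d := s w4)) ((He _ _ (neq _ _ h13)).1 e13);
    rewrite ?l_ge0 //=; lra.
- have gap23 := gap _ _ h23 n23; have gap41 := wrap_gap _ _ h14 n14.
  apply: (arcs_disjoint_of_gaps (b := s w3) (d := s w1 + 1)%Re)
    ((He _ _ (neq _ _ h24)).1 e24); rewrite ?l_ge0 //=; lra.
Qed.

Lemma strict_linear_order_rank (T : finType) (lt : T -> T -> Prop) :
  strict_linear_order lt ->
  exists r : T -> nat, injective r /\ (forall v, r v < #|T|) /\
    (forall u v, lt u v <-> r u < r v).
Proof.
move=> [irr [trans total]].
pose ltb u v : bool := if excluded_middle_informative (lt u v) then true else false.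
have ltbP u v : ltb u v <-> lt u v.
  by rewrite /ltb; case: excluded_middle_informative.
pose r v := #|[pred u | ltb u v]|.
have r_mono u v : lt u v -> r u < r v.
  move=> huv; apply/proper_card/properP; split.
  - by apply/subsetP => w; rewrite !inE => /ltbP hw; apply/ltbP; exact: trans hw huv.
  - by exists u; rewrite !inE; [apply/ltbP | apply/negP => /ltbP /irr].
have r_total u v : u <> v -> r u < r v \/ r v < r u.
  by move=> /total [] /r_mono; [left | right].
exists r; split; [|split].
- move=> u v ruv; case: (eqVneq u v) => [//|/eqP nuv].
  by case: (r_total _ _ nuv); rewrite ruv ltnn.
- move=> v; apply/proper_card/properP; split; first exact/subsetP.
  by exists v => //; rewrite !inE; apply/negP => /ltbP /irr.
- move=> u v; split; first exact: r_mono.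
  move=> ruv; have nuv : u <> v by move=> euv; rewrite euv ltnn in ruv.
  by case: (total _ _ nuv) => // /r_mono rvu; have := ltn_trans ruv rvu; rewrite ltnn.
Qed.

Lemma on_arc_div (n s l x : R) : (0 < n)%Re ->
  on_arc (s / n) (l / n) (x / n) <->
  exists k : Z, (s <= x + IZR k * n <= s + l)%Re.
Proof.
move=> n_gt0; have inv_gt0 := Rinv_0_lt_compat n n_gt0.
have div_le a b : (a / n <= b / n)%Re <-> (a <= b)%Re.
  split; [exact: Rmult_le_reg_r | exact/Rmult_le_compat_r/Rlt_le].
have shift k : (x / n + IZR k = (x + IZR k * n) / n)%Re by field; lra.
have add : (s / n + l / n = (s + l) / n)%Re by field; lra.
by split=> -[k hk]; exists k; move: hk; rewrite shift add !div_le.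
Qed.

Definition cdist (N a b : nat) : nat := (b + N - a) %% N.

Lemma cdistE (N a b : nat) : a < N -> b < N ->
  cdist N a b = if a <= b then b - a else b + N - a.
Proof.
move=> aN bN; rewrite /cdist; case: leqP => ab.
- by rewrite -addnBAC // modnDr modn_small // ltn_subLR //; lia.
- by rewrite modn_small //; lia.
Qed.

Lemma cdist_le_iff (N a b l : nat) : a < N ->
  (exists k : Z, (Z.of_nat a <= Z.of_nat b + k * Z.of_nat N <= Z.of_nat a + Z.of_nat l)%Z)
  <-> cdist N a b <= l.
Proof.
move=> aN; rewrite /cdist.
have := ltn_pmod (b + N - a) (leq_ltn_trans (leq0n a) aN).
have := divn_eq (b + N - a) N.
set q := (b + N - a) %/ N; set m := (b + N - a) %% N => Edivn mN.
split=> [[k hk] | mC]; last by exists (1 - Z.of_nat q)%Z; lia.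
(* b + k N - a = m + (k - 1 + q) N with 0 <= m < N *)
case: (Z.lt_ge_cases (k - 1 + Z.of_nat q) 0) => hq.
- have : ((k - 1 + Z.of_nat q) * Z.of_nat N <= - Z.of_nat N)%Z by nia.
  lia.
- have : (0 <= (k - 1 + Z.of_nat q) * Z.of_nat N)%Z by nia.
  lia.
Qed.

Lemma on_arc_nat_div (N a b l : nat) : a < N ->
  on_arc (INR a / INR N) (INR l / INR N) (INR b / INR N) <-> cdist N a b <= l.
Proof.
move=> aN; rewrite on_arc_div; last by apply/lt_0_INR/ltP; lia.
rewrite -cdist_le_iff //.
split=> -[k hk]; exists k; move: hk; rewrite !INR_IZR_INZ -mult_IZR -!plus_IZR.
- by move=> [/le_IZR h1 /le_IZR h2].
- by move=> [h1 h2]; split; apply: IZR_le.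
Qed.

Section ArcModel.

Variables (T : finType) (e : rel T) (N : nat) (r : T -> nat).
Hypotheses (e_sym : symmetric e) (r_inj : injective r) (r_lt : forall v, r v < N).
Hypothesis no_pattern : forall w1 w2 w3 w4, r w1 < r w2 -> r w2 < r w3 ->
  r w3 < r w4 -> ~ forbidden_pattern e w1 w2 w3 w4.

Local Notation d v u := (cdist N (r v) (r u)).

Definition adj_upto (v u : T) : bool :=
  [forall w, (w != v) && (d v w <= d v u) ==> e v w].

Definition reach (v : T) : nat := \max_(u | (u != v) && adj_upto v u) d v u.

Lemma cdist_rankE (v u : T) :
  d v u = if r v <= r u then r u - r v else r u + N - r v.
Proof. exact: cdistE. Qed.

Lemma rank_neq (u v : T) : u != v -> r u != r v.
Proof. by rewrite (inj_eq r_inj). Qed.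

Lemma cdist_gt0 (u v : T) : u != v -> 0 < d v u.
Proof.
move=> /rank_neq /eqP ruv; have := r_lt v.
by rewrite cdist_rankE; case: (leqP (r v) (r u)) => ? ?; lia.
Qed.

Lemma adj_of_le_reach (v u : T) : u != v -> d v u <= reach v -> e v u.
Proof.
move=> nuv le_reach; apply: contraT => nev.
have : reach v <= (d v u).-1.
  apply/bigmax_leqP => w /andP [_ /forallP /(_ u)].
  by rewrite nuv (negbTE nev) implybF -ltnNge => ?; lia.
have := cdist_gt0 nuv; lia.
Qed.

Lemma adj_upto_of_edge (i j : T) : r i < r j -> e i j -> adj_upto i j \/ adj_upto j i.
Proof.
move=> rij eij; case: (boolP (adj_upto i j)) => [|/forallPn [k]]; first by left.
rewrite negb_imply => /andP [/andP [nki dki] neik]; right.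
have nkj : k != j by apply: contraNneq neik => ->.
have [rik rkj] : r i < r k /\ r k < r j.
  move: dki (rank_neq nki) (rank_neq nkj) (r_lt j).
  rewrite !cdist_rankE (ltnW rij).
  by case: (leqP (r i) (r k)) => ? ? /eqP ? /eqP ? ?; lia.
apply/forallP => w; apply/implyP => /andP [nwj dwj].
case: (ltnP (r j) (r w)) => [rjw | rwj].
- apply: contraT => nejw; case: (no_pattern rik rkj rjw).
  by left; split.
- have rwi : r w <= r i.
    move: dwj (rank_neq nwj) (r_lt j).
    rewrite !cdist_rankE (leqNgt (r j) (r i)) rij /=.
    by case: (leqP (r j) (r w)) => ? ? /eqP ? ?; lia.
  case: (eqVneq w i) => [-> | nwi]; first by rewrite e_sym.
  have {}rwi : r w < r i by rewrite ltn_neqAle rank_neq.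
  rewrite e_sym; apply: contraT => newj; case: (no_pattern rwi rik rkj).
  by right; split.
Qed.

Lemma edge_iff_le_reach (u v : T) : u != v ->
  e u v <-> d u v <= reach u \/ d v u <= reach v.
Proof.
move=> nuv; split.
- move=> euv; case: (ltngtP (r u) (r v)) => [ruv|rvu|ruv].
  + case: (adj_upto_of_edge ruv euv) => hadj; [left | right];
      by apply: leq_bigmax_cond; rewrite hadj andbT // eq_sym.
  + rewrite e_sym in euv; case: (adj_upto_of_edge rvu euv) => hadj; [right | left];
      by apply: leq_bigmax_cond; rewrite hadj andbT // eq_sym.
  + by rewrite (r_inj ruv) eqxx in nuv.
- by case=> /adj_of_le_reach; [apply; rewrite eq_sym | rewrite e_sym; apply].
Qed.

Lemma circular_arc_graph_of_rank : circular_arc_graph e.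
Proof.
have N_gt0 (v : T) : (0 < INR N)%Re by apply/lt_0_INR/ltP; have := r_lt v; lia.
pose arc_len v := (INR (reach v) / INR N)%Re.
have len_ge0 v : (0 <= arc_len v)%Re.
  by apply: Rmult_le_pos; [exact: pos_INR | exact/Rlt_le/Rinv_0_lt_compat/N_gt0].
exists (fun v => INR (r v) / INR N)%Re, arc_len; split=> // u v /eqP nuv.
rewrite arcs_intersect_iff // !on_arc_nat_div //.
exact: edge_iff_le_reach.
Qed.

End ArcModel.

Theorem proposition4 (T : finType) (e : rel T) :
  simple_graph e ->
  (circular_arc_graph e <->
   exists lt : T -> T -> Prop,
     strict_linear_order lt /\
     ~ (exists w1 w2 w3 w4 : T,
          lt w1 w2 /\ lt w2 w3 /\ lt w3 w4 /\ forbidden_pattern e w1 w2 w3 w4)).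
Proof.
move=> [e_sym _]; split; first exact: circular_arc_graph_ordering.
move=> [lt [lt_order no_pattern]].
have [r [r_inj [r_lt r_mono]]] := strict_linear_order_rank lt_order.
apply: (circular_arc_graph_of_rank e_sym r_inj r_lt).
move=> w1 w2 w3 w4 r12 r23 r34 pattern; apply: no_pattern.
by exists w1, w2, w3, w4; rewrite !r_mono.
Qed.
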